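(* Let $G$ be a connected graph of order $n\geq 2$ and let $g:V(G_1)\to V(G_2)$ be a constant function. Then $Dist(F_G)=Dist(G)$.
   Context: All graphs are finite, simple and undirected. A labeling $f:V(H)\to\{1,\dots,t\}$ is $t$-distinguishing if the only label-preserving automorphism of $H$ is the identity; $Dist(H)$ is the least such $t$. Functigraph: for disjoint copies $G_1,G_2$ of $G$ and a function $g:V(G_1)\to V(G_2)$, $F_G$ has vertex set $V(G_1)\cup V(G_2)$ and edge set $E(G_1)\cup E(G_2)\cup\{uv: u\in V(G_1),\ g(u)=v\}$. *)

From mathcomp Require Import all_boot all_fingroup.
Set Implicit Arguments. Unset Strict Implicit. Unset Printing Implicit Defensive.

Definition simple_graph (T : finType) (e : rel T) : Prop :=
  symmetric e /\ irreflexive e.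

Definition connected_graph (T : finType) (e : rel T) : Prop :=
  forall x y, connect e x y.

Definition is_aut (T : finType) (e : rel T) (s : {perm T}) : bool :=
  [forall x, [forall y, e (s x) (s y) == e x y]].

(* There is a t-distinguishing labeling (labels 'I_t ~ {1,...,t}). *)
Definition has_dist_labeling (T : finType) (e : rel T) (t : nat) : bool :=
  [exists f : {ffun T -> 'I_t},
     [forall s : {perm T},
        (is_aut e s && [forall x, f (s x) == f x]) ==> (s == 1%g)]].

Lemma has_dist_labeling_card (T : finType) (e : rel T) :
  has_dist_labeling e #|T|.
Proof.
apply/existsP; exists [ffun x => enum_rank x].
apply/forallP => s; apply/implyP => /andP [_ /forallP H].
apply/eqP/permP => x; rewrite perm1.
by move: (H x); rewrite !ffunE => /eqP /enum_rank_inj.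
Qed.

Lemma has_dist_labeling_ex (T : finType) (e : rel T) :
  exists t, has_dist_labeling e t.
Proof. by exists #|T|; apply: has_dist_labeling_card. Qed.

Definition Dist (T : finType) (e : rel T) : nat :=
  ex_minn (has_dist_labeling_ex e).

(* Functigraph F_G on V(G_1) + V(G_2) = T + T, with g : V(G_1) -> V(G_2). *)
Definition functigraph_rel (T : finType) (e : rel T) (g : T -> T) : rel (T + T) :=
  fun a b => match a, b with
             | inl x, inl y => e x y
             | inr x, inr y => e x y
             | inl u, inr v => g u == v
             | inr v, inl u => g u == v
             end.

From mathcomp Require Import all_boot all_fingroup.
Set Implicit Arguments. Unset Strict Implicit. Unset Printing Implicit Defensive.

(* With g constant equal to c, the copy of c in G_2 is adjacent to all of G_1
   and to at least one vertex of G_2, so it is the unique vertex of maximum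
   degree and every automorphism fixes it.  Removing it leaves G_1 as a
   component with n vertices while every component inside G_2 has at most
   n - 1, so automorphisms preserve both copies.  Their restrictions are
   automorphisms of G, hence a labeling distinguishes F_G exactly when its
   restrictions to the two copies distinguish G; conversely a distinguishing
   labeling of F_G restricts to one of G_1, since automorphisms of G extend to
   F_G by the identity on G_2. *)

Lemma homo_connect (T1 T2 : finType) (e1 : rel T1) (e2 : rel T2) (h : T1 -> T2) :
  {homo h : x y / e1 x y >-> e2 x y} ->
  {homo h : x y / connect e1 x y >-> connect e2 x y}.
Proof.
move=> h_homo x _ /connectP [p p_path ->]; apply/connectP.
by exists (map h p); [exact: homo_path p_path | rewrite last_map].
Qed.

Definition distinguishing (T : finType) (e : rel T) (L : Type) (f : T -> L) :=
  forall s : {perm T}, is_aut e s -> (forall x, f (s x) = f x) -> s = 1%g.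

Section Automorphisms.
Variables (T : finType) (e : rel T).
Implicit Types (s : {perm T}) (x y : T).

Lemma is_autP s : reflect (forall x y, e (s x) (s y) = e x y) (is_aut e s).
Proof.
apply: (iffP forallP) => [aut_s x y | aut_s x]; last by apply/forallP => y; rewrite aut_s.
by move/(_ x)/forallP/(_ y)/eqP: aut_s.
Qed.

Lemma is_aut_inv s : is_aut e s -> is_aut e s^-1.
Proof.
move=> /is_autP aut_s; apply/is_autP => x y.
by rewrite -{2}(permKV s x) -{2}(permKV s y) aut_s.
Qed.

Lemma has_dist_labelingP t :
  reflect (exists f : T -> 'I_t, distinguishing e f) (has_dist_labeling e t).
Proof.
apply: (iffP existsP) => [[f /forallP f_dist] | [f f_dist]].
  exists f => s aut_s f_s; apply/eqP.
  by have /implyP := f_dist s; apply; rewrite aut_s; apply/forallP => x; rewrite f_s.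
exists [ffun x => f x]; apply/forallP => s; apply/implyP => /andP [aut_s /forallP f_s].
by apply/eqP/f_dist => // x; have /eqP := f_s x; rewrite !ffunE.
Qed.

Lemma connect_aut s x y : is_aut e s -> connect e (s x) (s y) = connect e x y.
Proof.
have homo r : is_aut e r -> {homo r : a b / connect e a b}.
  by move=> /is_autP aut_r; apply: homo_connect => a b; rewrite aut_r.
move=> aut_s; apply/idP/idP; last exact: homo.
by rewrite -{2}(permK s x) -{2}(permK s y); apply: homo (is_aut_inv aut_s) _ _.
Qed.

Lemma card_rel_perm (r : rel T) s x :
  (forall x y, r (s x) (s y) = r x y) ->
  #|[set y | r (s x) y]| = #|[set y | r x y]|.
Proof.
move=> r_s; rewrite -[RHS](card_imset _ (@perm_inj _ s)); apply: eq_card => y.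
by rewrite -(permKV s y) mem_imset ?inE ?r_s //; exact: perm_inj.
Qed.

Definition deg x := #|[set y | e x y]|.

Definition component x := [set y | connect e x y].

Lemma deg_aut s x : is_aut e s -> deg (s x) = deg x.
Proof. by move=> /is_autP aut_s; apply: card_rel_perm. Qed.

Lemma card_component_aut s x : is_aut e s -> #|component (s x)| = #|component x|.
Proof. by move=> aut_s; apply: card_rel_perm => a b; apply: connect_aut. Qed.

Lemma aut_fix_max_deg s x :
  (forall y, y != x -> deg y < deg x) -> is_aut e s -> s x = x.
Proof.
move=> deg_max aut_s; apply/eqP/negPn/negP => /deg_max.
by rewrite (deg_aut x aut_s) ltnn.
Qed.

Lemma deg_lt_card x : irreflexive e -> deg x < #|T|.
Proof.
move=> e_irr; rewrite /deg -cardsT; apply: proper_card; apply/properP.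
by split; [exact: subsetT | exists x; rewrite ?inE ?e_irr].
Qed.

Lemma connected_neighbor x : connected_graph e -> 1 < #|T| -> exists y, e x y.
Proof.
move=> e_conn; rewrite (cardD1 x) inE ltnS => /card_gt0P [y].
rewrite !inE => /andP [y_neq_x _].
have /connectP [[|z p] /= x_p y_last] := e_conn x y.
  by rewrite y_last eqxx in y_neq_x.
by case/andP: x_p => e_xz _; exists z.
Qed.

End Automorphisms.

Definition del_vertex (T : finType) (e : rel T) (z : T) : rel T :=
  [rel a b | [&& e a b, a != z & b != z]].

Lemma del_vertex_aut (T : finType) (e : rel T) (s : {perm T}) z :
  is_aut e s -> s z = z -> is_aut (del_vertex e z) s.
Proof.
move=> /is_autP aut_s s_z; apply/is_autP => a b.
have s_neq y : (s y != z) = (y != z) by rewrite -{1}s_z (inj_eq perm_inj).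
by rewrite /del_vertex /= aut_s !s_neq.
Qed.

Section InducedCopy.
Variables (T U : finType) (eT : rel T) (eU : rel U) (h : T -> U).
Hypotheses (h_inj : injective h) (h_induced : forall a b, eU (h a) (h b) = eT a b).

Lemma stable_image_perm (s : {perm U}) :
  (forall x, exists y, s (h x) = h y) -> exists p : {perm T}, forall x, s (h x) = h (p x).
Proof.
move=> /fin_all_exists [f s_h].
have f_inj : injective f.
  by move=> a b f_ab; apply/h_inj/(@perm_inj _ s); rewrite !s_h f_ab.
by exists (perm f_inj) => x; rewrite permE.
Qed.

Lemma restrict_aut (s : {perm U}) (p : {perm T}) :
  is_aut eU s -> (forall x, s (h x) = h (p x)) -> is_aut eT p.
Proof.
move=> /is_autP aut_s s_h; apply/is_autP => a b.
by rewrite -!h_induced -!s_h aut_s.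
Qed.

Lemma stable_aut_fixed (L : Type) (f : T -> L) (fU : U -> L) (s : {perm U}) :
  (forall x, fU (h x) = f x) -> distinguishing eT f ->
  is_aut eU s -> (forall u, fU (s u) = fU u) ->
  (forall x, exists y, s (h x) = h y) -> forall x, s (h x) = h x.
Proof.
move=> fU_h f_dist aut_s fU_s /stable_image_perm [p s_h] x.
suff p1 : p = 1%g by rewrite s_h p1 perm1.
apply: f_dist (restrict_aut aut_s s_h) _ => y.
by rewrite -!fU_h -s_h fU_s.
Qed.

End InducedCopy.

Section SumPerm.
Variables (T U : finType) (s : {perm T}).

Definition inl_act (a : T + U) : T + U := if a is inl x then inl (s x) else a.

Lemma inl_act_inj : injective inl_act.
Proof. by move=> [x|x] [y|y] //= [/perm_inj ->]. Qed.

Definition inl_perm := perm inl_act_inj.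

End SumPerm.

Section ConstantFunctigraph.
Variables (T : finType) (e : rel T) (g : T -> T) (c : T).
Hypothesis g_const : forall u, g u = c.

Local Notation F := (functigraph_rel e g).

Lemma functigraph_inl_perm_aut (s : {perm T}) : is_aut e s -> is_aut F (inl_perm T s).
Proof.
move=> /is_autP aut_s; apply/is_autP => -[x|x] [y|y].
all: by rewrite !permE /= ?g_const ?aut_s.
Qed.

Lemma functigraph_dist_labeling_down t : has_dist_labeling F t -> has_dist_labeling e t.
Proof.
move=> /has_dist_labelingP [f f_dist]; apply/has_dist_labelingP.
exists (f \o inl) => s aut_s f_s.
have lift_s1 : inl_perm T s = 1%g.
  by apply: f_dist (functigraph_inl_perm_aut aut_s) _ => -[x|x]; rewrite permE //=; apply: f_s.
apply/permP => x; have := congr1 (fun r : {perm T + T} => r (inl x)) lift_s1.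
by rewrite permE !perm1 => -[].
Qed.

Hypotheses (e_irr : irreflexive e) (e_conn : connected_graph e) (T_ge2 : 1 < #|T|).

Lemma functigraph_deg_hub : #|T| < deg F (inr c).
Proof.
have [z e_cz] := connected_neighbor c e_conn T_ge2.
have sub : inr z |: [set inl w | w in T] \subset [set y | F (inr c) y].
  apply/subsetP => -[w|w]; rewrite !inE /= ?g_const ?eqxx //.
  by case/orP => [/eqP [->] | /imsetP [? _ //]].
apply: leq_trans (subset_leq_card sub); rewrite cardsU1 card_imset; last exact: inl_inj.
by have /negbTE -> : inr z \notin [set inl w | w in T] by apply/imsetP => -[? _ //].
Qed.

Lemma functigraph_deg_inl u : deg F (inl u) <= #|T|.
Proof.
have sub : [set y | F (inl u) y] \subset inr c |: [set inl w | w in [set w | e u w]].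
  apply/subsetP => -[w|w]; rewrite !inE /= ?g_const.
  - by move=> e_uw; rewrite imset_f ?orbT ?inE.
  - by move=> /eqP ->; rewrite eqxx.
apply: leq_trans (subset_leq_card sub) _.
rewrite cardsU1 card_imset; last exact: inl_inj.
exact: leq_trans (leq_add (leq_b1 _) (leqnn _)) (deg_lt_card u e_irr).
Qed.

Lemma functigraph_deg_inr v : v != c -> deg F (inr v) < #|T|.
Proof.
move=> v_neq_c.
have sub : [set y | F (inr v) y] \subset [set inr w | w in [set w | e v w]].
  apply/subsetP => -[w|w]; rewrite !inE /= ?g_const.
  - by move=> /eqP c_eq_v; rewrite c_eq_v eqxx in v_neq_c.
  - by move=> e_vw; rewrite imset_f ?inE.
apply: leq_ltn_trans (subset_leq_card sub) _.
by rewrite card_imset; [exact: deg_lt_card | exact: inr_inj].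
Qed.

Lemma functigraph_aut_fix_hub s : is_aut F s -> s (inr c) = inr c.
Proof.
apply: aut_fix_max_deg => -[u|v] x_neq; apply: (leq_ltn_trans _ functigraph_deg_hub).
- exact: functigraph_deg_inl.
- by apply/ltnW/functigraph_deg_inr; apply: contraNneq x_neq => ->.
Qed.

Local Notation F' := (del_vertex F (inr c)).

Lemma functigraph_component_inl u : #|T| <= #|component F' (inl u)|.
Proof.
have sub : [set inl w | w in T] \subset component F' (inl u).
  apply/subsetP => _ /imsetP [w _ ->]; rewrite inE.
  by apply: homo_connect (e_conn u w) => a b e_ab; rewrite /del_vertex /= e_ab.
by apply: leq_trans (subset_leq_card sub); rewrite card_imset //; exact: inl_inj.
Qed.

Lemma functigraph_component_inr v : v != c -> #|component F' (inr v)| < #|T|.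
Proof.
move=> v_neq_c.
pose off_hub := [pred y : T + T | if y is inr w then w != c else false].
have off_hub_closed : closed F' off_hub.
  move=> [a|a] [b|b]; rewrite /del_vertex /= ?g_const ?(inj_eq inr_inj) ?inE //=.
  - by rewrite eq_sym andbN.
  - by rewrite eq_sym andbA andbN.
  - by case/and3P => _ -> ->.
have sub : component F' (inr v) \subset [set inr w | w in [set~ c]].
  apply/subsetP => y; rewrite inE => /(closed_connect off_hub_closed).
  rewrite !inE /= v_neq_c; case: y => // w w_neq_c.
  by rewrite imset_f // in_setC1 -w_neq_c.
apply: leq_ltn_trans (subset_leq_card sub) _.
rewrite card_imset ?cardsC1 ?ltn_predL; last exact: inr_inj.
exact: ltnW T_ge2.
Qed.

Lemma functigraph_aut_inl s u : is_aut F s -> exists w, s (inl u) = inl w.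
Proof.
move=> aut_s; have s_hub := functigraph_aut_fix_hub aut_s.
case s_u: (s (inl u)) => [w|v]; first by exists w.
have v_neq_c : v != c.
  by apply/eqP => v_eq_c; move: s_u; rewrite v_eq_c -s_hub => /perm_inj.
have := card_component_aut (inl u) (del_vertex_aut aut_s s_hub).
rewrite s_u => card_eq; have := functigraph_component_inr v_neq_c.
by rewrite card_eq ltnNge functigraph_component_inl.
Qed.

Lemma functigraph_aut_inr s v : is_aut F s -> exists w, s (inr v) = inr w.
Proof.
move=> aut_s; case s_v: (s (inr v)) => [u|w]; last by exists w.
have [w s'_u] := functigraph_aut_inl u (is_aut_inv aut_s).
by move: s'_u; rewrite -s_v permK.
Qed.

Lemma functigraph_dist_labeling_up t : has_dist_labeling e t -> has_dist_labeling F t.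
Proof.
move=> /has_dist_labelingP [f f_dist]; apply/has_dist_labelingP.
exists (fun a => match a with inl u | inr u => f u end) => s aut_s f_s.
apply/permP => -[u|u]; rewrite perm1.
- apply: (stable_aut_fixed (h := inl) _ _ _ f_dist aut_s f_s) => //; first exact: inl_inj.
  by move=> x; apply: functigraph_aut_inl.
- apply: (stable_aut_fixed (h := inr) _ _ _ f_dist aut_s f_s) => //; first exact: inr_inj.
  by move=> x; apply: functigraph_aut_inr.
Qed.

End ConstantFunctigraph.

Theorem lemma2p3 (T : finType) (e : rel T) (g : T -> T) :
  simple_graph e -> connected_graph e -> 2 <= #|T| ->
  (exists c : T, forall u, g u = c) ->
  Dist (functigraph_rel e g) = Dist e.
Proof.
move=> [_ e_irr] e_conn T_ge2 [c g_const].
apply: eq_ex_minn => t; apply/idP/idP.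
- exact: functigraph_dist_labeling_down g_const t.
- exact: functigraph_dist_labeling_up g_const e_irr e_conn T_ge2 t.
Qed.
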